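(* Let $U$ be a finite nonempty set, $(T,I,N)$ a residual triplet, $\widetilde{R}$ a $T$-preorder relation on $U$, $u,v\in U$ and $\lambda\in[0,1]$. (i) If the granules $\widetilde{R}^+_{1}(u)$ and $\widetilde{R}^-_{\lambda}(v)$ are $T$-disjoint, then $\widetilde{R}^-_{\lambda}(v)$ is adjacent to $\widetilde{R}^+_{1}(u)$. (ii) If the granules $\widetilde{R}^+_{\lambda}(u)$ and $\widetilde{R}^-_{1}(v)$ are $T$-disjoint, then $\widetilde{R}^+_{\lambda}(u)$ is adjacent to $\widetilde{R}^-_{1}(v)$. That is, every granule is adjacent to every granule with parameter $1$ from which it is $T$-disjoint.
   Context: A residual triplet $(T,I,N)$ consists of a left-continuous $t$-norm $T$, its residual implicator $I(x,y)=\sup\{\beta\in[0,1]: T(x,\beta)\le y\}$ and $N(x)=I(x,0)$. $\widetilde{R}:U\times U\to[0,1]$ is a $T$-preorder if reflexive and $T$-transitive. Granules: $\widetilde{R}^+_\lambda(u)$ is the fuzzy set $w\mapsto T(\widetilde{R}(w,u),\lambda)$ and $\widetilde{R}^-_\lambda(v)$ is $w\mapsto T(\widetilde{R}(v,w),\lambda)$. Fuzzy sets $B,C$ on $U$ are $T$-disjoint if $T(B(w),C(w))=0$ for all $w$. Adjacency: $\widetilde{R}^-_{\lambda_2}(v)$ is adjacent to $\widetilde{R}^+_{\lambda_1}(u)$ if $\lambda_1=I(\lambda_2,N(\widetilde{R}(v,u)))$; $\widetilde{R}^+_{\lambda_1}(u)$ is adjacent to $\widetilde{R}^-_{\lambda_2}(v)$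 if $\lambda_2=I(\lambda_1,N(\widetilde{R}(v,u)))$. *)

From Stdlib Require Import Reals List.
Open Scope R_scope.

Definition unit_int (x : R) : Prop := 0 <= x <= 1.

Definition is_tnorm (T : R -> R -> R) : Prop :=
  (forall x y, unit_int x -> unit_int y -> unit_int (T x y)) /\
  (forall x y, unit_int x -> unit_int y -> T x y = T y x) /\
  (forall x y z, unit_int x -> unit_int y -> unit_int z ->
      T x (T y z) = T (T x y) z) /\
  (forall x x' y, unit_int x -> unit_int x' -> unit_int y ->
      x <= x' -> T x y <= T x' y) /\
  (forall x, unit_int x -> T x 1 = x).

(* Left-continuity (in the first argument; by commutativity in both). *)
Definition left_continuous_tnorm (T : R -> R -> R) : Prop :=
  forall x y, 0 < x <= 1 -> unit_int y ->
    forall eps, 0 < eps -> exists delta, 0 < delta /\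
      forall z, unit_int z -> x - delta < z <= x -> Rabs (T x y - T z y) < eps.

Definition is_residual_implicator (T I : R -> R -> R) : Prop :=
  forall x y, unit_int x -> unit_int y ->
    is_lub (fun b => unit_int b /\ T x b <= y) (I x y).

Definition residual_triplet (T I : R -> R -> R) (N : R -> R) : Prop :=
  is_tnorm T /\ left_continuous_tnorm T /\ is_residual_implicator T I /\
  (forall x, N x = I x 0).

Definition fin_nonempty (U : Type) : Prop :=
  inhabited U /\ exists l : list U, forall u, In u l.

Definition T_preorder {U : Type} (T : R -> R -> R) (Rt : U -> U -> R) : Prop :=
  (forall u w, unit_int (Rt u w)) /\
  (forall u, Rt u u = 1) /\
  (forall u v w, T (Rt u v) (Rt v w) <= Rt u w).

Definition granule_plus {U : Type} (T : R -> R -> R) (Rt : U -> U -> R)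
  (lam : R) (u : U) : U -> R := fun w => T (Rt w u) lam.
Definition granule_minus {U : Type} (T : R -> R -> R) (Rt : U -> U -> R)
  (lam : R) (v : U) : U -> R := fun w => T (Rt v w) lam.

Definition T_disjoint {U : Type} (T : R -> R -> R) (B C : U -> R) : Prop :=
  forall w, T (B w) (C w) = 0.

Definition minus_adjacent_to_plus {U : Type} (I : R -> R -> R) (N : R -> R)
  (Rt : U -> U -> R) (l2 : R) (v : U) (l1 : R) (u : U) : Prop :=
  l1 = I l2 (N (Rt v u)).

Definition plus_adjacent_to_minus {U : Type} (I : R -> R -> R) (N : R -> R)
  (Rt : U -> U -> R) (l1 : R) (u : U) (l2 : R) (v : U) : Prop :=
  l2 = I l1 (N (Rt v u)).

From Stdlib Require Import Reals Lra.
Open Scope R_scope.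

(* Evaluated at the point where the parameter-1 granule equals [1] ([w = u] in
   (i), [w = v] in (ii)), T-disjointness gives [T (Rt v u) lam = 0], i.e.
   [lam <= N (Rt v u)]; by residuation [x <= y] forces [I x y = 1], so
   [I lam (N (Rt v u)) = 1]. *)

Lemma unit_int_0 : unit_int 0.
Proof. unfold unit_int; lra. Qed.

Lemma unit_int_1 : unit_int 1.
Proof. unfold unit_int; lra. Qed.

Section Tnorm.

Variable T : R -> R -> R.
Hypothesis HT : is_tnorm T.

Lemma tnorm_unit_int x y : unit_int x -> unit_int y -> unit_int (T x y).
Proof. destruct HT as [H _]; apply H. Qed.

Lemma tnormC x y : unit_int x -> unit_int y -> T x y = T y x.
Proof. destruct HT as [_ [H _]]; apply H. Qed.

Lemma tnorm_le2l x x' y :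
  unit_int x -> unit_int x' -> unit_int y -> x <= x' -> T x y <= T x' y.
Proof. destruct HT as [_ [_ [_ [H _]]]]; apply H. Qed.

Lemma tnorm_x1 x : unit_int x -> T x 1 = x.
Proof. destruct HT as [_ [_ [_ [_ H]]]]; apply H. Qed.

Lemma tnorm_1x x : unit_int x -> T 1 x = x.
Proof.
  intros Hx; rewrite tnormC by (exact unit_int_1 || exact Hx).
  now apply tnorm_x1.
Qed.

Lemma tnorm_x0 x : unit_int x -> T x 0 = 0.
Proof.
  intros Hx.
  assert (Hle : T x 0 <= T 1 0).
  { apply tnorm_le2l; auto using unit_int_0, unit_int_1.
    unfold unit_int in Hx; lra. }
  rewrite tnorm_1x in Hle by exact unit_int_0.
  pose proof (tnorm_unit_int x 0 Hx unit_int_0) as Hpos.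
  unfold unit_int in Hpos; lra.
Qed.

Section Residuum.

Variable I : R -> R -> R.
Hypothesis HI : is_residual_implicator T I.

Lemma le_residuum x y b :
  unit_int x -> unit_int y -> unit_int b -> T x b <= y -> b <= I x y.
Proof. intros Hx Hy Hb Hxb; now apply (HI x y Hx Hy). Qed.

Lemma residuum_le1 x y : unit_int x -> unit_int y -> I x y <= 1.
Proof.
  intros Hx Hy; apply (HI x y Hx Hy).
  intros b [Hb _]; unfold unit_int in Hb; lra.
Qed.

Lemma residuum_unit_int x y : unit_int x -> unit_int y -> unit_int (I x y).
Proof.
  intros Hx Hy; split; [|now apply residuum_le1].
  apply le_residuum; auto using unit_int_0.
  rewrite tnorm_x0 by exact Hx; unfold unit_int in Hy; lra.
Qed.

Lemma residuum_eq1 x y : unit_int x -> unit_int y -> x <= y -> I x y = 1.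
Proof.
  intros Hx Hy Hxy; apply Rle_antisym; [now apply residuum_le1|].
  apply le_residuum; auto using unit_int_1.
  now rewrite tnorm_x1.
Qed.

Lemma tnorm_eq0_residuum_neg_eq1 r lam :
  unit_int r -> unit_int lam -> T r lam = 0 -> I lam (I r 0) = 1.
Proof.
  intros Hr Hlam H0.
  apply residuum_eq1; auto using residuum_unit_int, unit_int_0.
  apply le_residuum; auto using unit_int_0.
  now rewrite H0; apply Rle_refl.
Qed.

End Residuum.

Section Granules.

Variables (U : Type) (Rt : U -> U -> R).
Hypothesis HR : T_preorder T Rt.

Lemma T_disjoint_plus1_minus u v lam : unit_int lam ->
  T_disjoint T (granule_plus T Rt 1 u) (granule_minus T Rt lam v) ->
  T (Rt v u) lam = 0.
Proof.
  destruct HR as [Hunit [Hrefl _]]; intros Hlam D.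
  specialize (D u); unfold granule_plus, granule_minus in D.
  rewrite Hrefl, tnorm_x1, tnorm_1x in D; auto using unit_int_1, tnorm_unit_int.
Qed.

Lemma T_disjoint_plus_minus1 u v lam : unit_int lam ->
  T_disjoint T (granule_plus T Rt lam u) (granule_minus T Rt 1 v) ->
  T (Rt v u) lam = 0.
Proof.
  destruct HR as [Hunit [Hrefl _]]; intros Hlam D.
  specialize (D v); unfold granule_plus, granule_minus in D.
  rewrite Hrefl, !tnorm_x1 in D; auto using unit_int_1, tnorm_unit_int.
Qed.

End Granules.

End Tnorm.

Theorem proposition5 (U : Type) (T I : R -> R -> R) (N : R -> R)
  (Rt : U -> U -> R) (u v : U) (lam : R) :
  fin_nonempty U ->
  residual_triplet T I N ->
  T_preorder T Rt ->
  unit_int lam ->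
  (T_disjoint T (granule_plus T Rt 1 u) (granule_minus T Rt lam v) ->
     minus_adjacent_to_plus I N Rt lam v 1 u) /\
  (T_disjoint T (granule_plus T Rt lam u) (granule_minus T Rt 1 v) ->
     plus_adjacent_to_minus I N Rt lam u 1 v).
Proof.
  intros _ [HT [_ [HI HN]]] HR Hlam.
  assert (Hvu : unit_int (Rt v u)) by (destruct HR as [Hunit _]; apply Hunit).
  unfold minus_adjacent_to_plus, plus_adjacent_to_minus; rewrite HN.
  split; intros D; symmetry; apply (tnorm_eq0_residuum_neg_eq1 T HT I HI);
    auto.
  - now apply (T_disjoint_plus1_minus T HT U Rt HR).
  - now apply (T_disjoint_plus_minus1 T HT U Rt HR).
Qed.
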